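(* Let $\theta,\eta\in(0,\tfrac{\pi}{4}]$, and let the four qubits $A,C_1,C_2,B$ be in the state $|\Phi_\theta\rangle_{AC_1}\otimes|\Phi_\eta\rangle_{C_2B}$. Let $|\varphi\rangle\in\mathbb{C}^2\otimes\mathbb{C}^2$ be a unit vector on Clare's system $C_1C_2$ such that, conditioned on Clare's system being projected onto $|\varphi\rangle$, the resulting (normalized) state of Alice and Bob's qubits $AB$ is a maximally entangled two-qubit state, i.e. of the form $(U\otimes I)\tfrac{1}{\sqrt2}(|00\rangle+|11\rangle)$ for some $2\times2$ unitary $U$. Then the probability $p(\varphi)$ of this projection outcome satisfies $$\frac{\sin^2 2\theta\,\sin^2 2\eta}{4(1+\cos2\theta\cos2\eta)}\le p(\varphi)\le \frac{\sin^2 2\theta\,\sin^2 2\eta}{4(1-\cos2\theta\cos2\eta)}.$$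
   Context: For $\lambda\in[0,\tfrac{\pi}{2}]$, $|\Phi_\lambda\rangle=\cos\lambda|00\rangle+\sin\lambda|11\rangle$. Alice holds qubit $A$, Clare holds qubits $C_1$ (entangled initially with $A$) and $C_2$ (entangled initially with $B$), Bob holds qubit $B$. The probability of projecting Clare's system onto $|\varphi\rangle$ is $p(\varphi)=\|(\langle\varphi|_{C_1C_2}\otimes I_{AB})|\Phi_\theta\rangle_{AC_1}|\Phi_\eta\rangle_{C_2B}\|^2$. *)

From Stdlib Require Import Reals Lra.
Open Scope R_scope.

Record Cx := mkC { re : R; im : R }.
Definition C0 : Cx := mkC 0 0.
Definition C1 : Cx := mkC 1 0.
Definition RtoC (r : R) : Cx := mkC r 0.
Definition Cadd (z w : Cx) : Cx := mkC (re z + re w) (im z + im w).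
Definition Cmul (z w : Cx) : Cx :=
  mkC (re z * re w - im z * im w) (re z * im w + im z * re w).
Definition Cconj (z : Cx) : Cx := mkC (re z) (- im z).
Definition Cscale (r : R) (z : Cx) : Cx := mkC (r * re z) (r * im z).
Definition Cnorm2 (z : Cx) : R := re z ^ 2 + im z ^ 2.

(* qubit basis indices: false = |0>, true = |1> *)
Definition bsum (f : bool -> Cx) : Cx := Cadd (f false) (f true).
Definition rsum (f : bool -> R) : R := f false + f true.
Definition delta (i j : bool) : Cx := if Bool.eqb i j then C1 else C0.

(* |Phi_l> = cos l |00> + sin l |11>, as amplitudes (i j) *)
Definition Phi (l : R) (i j : bool) : Cx :=
  if Bool.eqb i j then (if i then RtoC (sin l) else RtoC (cos l)) else C0.

Definition unit_vec (phi : bool -> bool -> Cx) : Prop :=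
  rsum (fun i => rsum (fun j => Cnorm2 (phi i j))) = 1.

(* unnormalized AB state (<phi|_{C1C2} ⊗ I_{AB}) |Phi_th>_{AC1} |Phi_eta>_{C2B} *)
Definition post_state (th eta : R) (phi : bool -> bool -> Cx) (a b : bool) : Cx :=
  bsum (fun c1 => bsum (fun c2 =>
    Cmul (Cconj (phi c1 c2)) (Cmul (Phi th a c1) (Phi eta c2 b)))).

Definition prob (th eta : R) (phi : bool -> bool -> Cx) : R :=
  rsum (fun a => rsum (fun b => Cnorm2 (post_state th eta phi a b))).

Definition unitary2 (U : bool -> bool -> Cx) : Prop :=
  forall i j, bsum (fun k => Cmul (Cconj (U k i)) (U k j)) = delta i j.

(* amplitudes of (U ⊗ I) (|00> + |11>)/sqrt 2 *)
Definition maxent_vec (U : bool -> bool -> Cx) (a b : bool) : Cx :=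
  Cscale (/ sqrt 2) (bsum (fun k => Cmul (U a k) (delta k b))).

Definition yields_maxent (th eta : R) (phi : bool -> bool -> Cx) : Prop :=
  0 < prob th eta phi /\
  exists U, unitary2 U /\
    forall a b, Cscale (/ sqrt (prob th eta phi)) (post_state th eta phi a b)
                = maxent_vec U a b.

(** The post-measurement amplitudes factor as [conj (phi a b) * t_th(a) * t_eta(b)] with
    [t(0) = cos], [t(1) = sin]. Maximal entanglement forces their squared moduli to be
    [p/2] times those of a unitary, and a 2x2 unitary has moduli [c] on the diagonal and
    [1 - c] off it. Dividing by [t_th(a)^2 t_eta(b)^2] and summing with [unit_vec] gives
    [2 a A b B = p (c P + (1 - c) Q)], where [a, A] = [cos^2 th, sin^2 th], [b, B] likewise
    for [eta], [P = a b + A B] and [Q = a B + A b]. Since [P >= Q > 0] when both angles are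
    at most [pi/4], [p] lies between [2 a A b B / P] and [2 a A b B / Q], which are the two
    bounds of the theorem. *)

From Stdlib Require Import Reals Lra Psatz.
Open Scope R_scope.

Lemma Cnorm2_ge0 z : 0 <= Cnorm2 z.
Proof. unfold Cnorm2; nra. Qed.

Lemma Cnorm2_mul z w : Cnorm2 (Cmul z w) = Cnorm2 z * Cnorm2 w.
Proof. unfold Cnorm2, Cmul; simpl; ring. Qed.

Lemma Cnorm2_conj z : Cnorm2 (Cconj z) = Cnorm2 z.
Proof. unfold Cnorm2, Cconj; simpl; ring. Qed.

Lemma Cnorm2_scale r z : Cnorm2 (Cscale r z) = r ^ 2 * Cnorm2 z.
Proof. unfold Cnorm2, Cscale; simpl; ring. Qed.

Lemma inv_sqrt_sq x : 0 < x -> (/ sqrt x) ^ 2 = / x.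
Proof.
  intros Hx. rewrite <- (sqrt_sqrt x) at 2 by lra.
  assert (sqrt x <> 0) by (apply Rgt_not_eq, sqrt_lt_R0; lra).
  field; auto.
Qed.

Section Unitary2.

Variable U : bool -> bool -> Cx.
Hypothesis HU : unitary2 U.

Lemma unitary2_col_norm j : Cnorm2 (U false j) + Cnorm2 (U true j) = 1.
Proof.
  pose proof (f_equal re (HU j j)) as H.
  destruct j; unfold bsum, delta, Cnorm2, Cmul, Cconj, Cadd, C1 in *; simpl in *; lra.
Qed.

(* Orthogonality of the two columns: [conj u00 u01 = - conj u10 u11], then take moduli. *)
Lemma unitary2_cross_norm :
  Cnorm2 (U false false) * Cnorm2 (U false true)
  = Cnorm2 (U true false) * Cnorm2 (U true true).
Proof.
  pose proof (HU false true) as H; unfold bsum, delta in H; cbn [Bool.eqb] in H.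
  rewrite <- (Cnorm2_conj (U false false)), <- (Cnorm2_conj (U true false)),
    <- !Cnorm2_mul.
  set (w1 := Cmul (Cconj (U false false)) (U false true)) in *.
  set (w2 := Cmul (Cconj (U true false)) (U true true)) in *.
  pose proof (f_equal re H) as Hr; pose proof (f_equal im H) as Hi.
  cbn [re im Cadd C0] in Hr, Hi.
  assert (Ere : re w1 = - re w2) by lra. assert (Eim : im w1 = - im w2) by lra.
  unfold Cnorm2; rewrite Ere, Eim; ring.
Qed.

Lemma unitary2_norm_pattern :
  exists c, 0 <= c <= 1 /\
    forall a b, Cnorm2 (U a b) = if Bool.eqb a b then c else 1 - c.
Proof.
  pose proof (unitary2_col_norm false) as H0; pose proof (unitary2_col_norm true) as H1.
  pose proof unitary2_cross_norm as Hx.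
  pose proof (Cnorm2_ge0 (U false false)); pose proof (Cnorm2_ge0 (U true false)).
  assert (E01 : Cnorm2 (U false true) = 1 - Cnorm2 (U false false)) by nra.
  exists (Cnorm2 (U false false)); split; [lra|].
  intros [|] [|]; cbn [Bool.eqb]; lra.
Qed.

End Unitary2.

Definition schmidt_coef (l : R) (a : bool) : R := if a then sin l else cos l.

Lemma Cnorm2_post_state th eta phi a b :
  Cnorm2 (post_state th eta phi a b)
  = Cnorm2 (phi a b) * schmidt_coef th a ^ 2 * schmidt_coef eta b ^ 2.
Proof.
  destruct a, b;
    unfold post_state, bsum, Phi, Cnorm2, Cmul, Cconj, Cadd, RtoC, C0, schmidt_coef;
    simpl; ring.
Qed.

Lemma Cnorm2_maxent_vec U a b : Cnorm2 (maxent_vec U a b) = / 2 * Cnorm2 (U a b).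
Proof.
  unfold maxent_vec; rewrite Cnorm2_scale, inv_sqrt_sq by lra.
  f_equal; destruct b; unfold bsum, delta, Cnorm2, Cmul, Cadd, C1, C0; simpl; ring.
Qed.

Lemma yields_maxent_weights th eta phi :
  yields_maxent th eta phi ->
  exists c, 0 <= c <= 1 /\ forall a b,
    2 * (Cnorm2 (phi a b) * schmidt_coef th a ^ 2 * schmidt_coef eta b ^ 2)
    = prob th eta phi * (if Bool.eqb a b then c else 1 - c).
Proof.
  intros [Hp [U [HU HM]]].
  destruct (unitary2_norm_pattern U HU) as [c [Hc HUc]].
  exists c; split; [exact Hc|]; intros a b.
  pose proof (f_equal Cnorm2 (HM a b)) as H.
  rewrite Cnorm2_scale, Cnorm2_maxent_vec, inv_sqrt_sq, Cnorm2_post_state, HUc in H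
    by exact Hp.
  transitivity (2 * prob th eta phi * (/ prob th eta phi
    * (Cnorm2 (phi a b) * schmidt_coef th a ^ 2 * schmidt_coef eta b ^ 2)));
    [field; lra | rewrite H; field].
Qed.

Lemma prob_mixture a A b B p c x00 x01 x10 x11 :
  x00 + x01 + (x10 + x11) = 1 ->
  2 * (x00 * a * b) = p * c -> 2 * (x01 * a * B) = p * (1 - c) ->
  2 * (x10 * A * b) = p * (1 - c) -> 2 * (x11 * A * B) = p * c ->
  2 * (a * A * b * B) = p * (c * (a * b + A * B) + (1 - c) * (a * B + A * b)).
Proof.
  intros Hx H00 H01 H10 H11.
  transitivity (A * B * (2 * (x00 * a * b)) + A * b * (2 * (x01 * a * B))
                + a * B * (2 * (x10 * A * b)) + a * b * (2 * (x11 * A * B))).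
  - rewrite <- (Rmult_1_r (2 * _)), <- Hx; ring.
  - rewrite H00, H01, H10, H11; ring.
Qed.

Lemma mixture_bounds w P Q p c :
  0 < Q <= P -> 0 <= c <= 1 -> 0 < p -> w = p * (c * P + (1 - c) * Q) ->
  w / P <= p /\ p <= w / Q.
Proof.
  intros HQP Hc Hp ->.
  assert (0 <= p * (1 - c) * (P - Q)) by (apply Rmult_le_pos; nra).
  assert (0 <= p * c * (P - Q)) by (apply Rmult_le_pos; nra).
  split; unfold Rdiv.
  - apply (Rmult_le_reg_r P); [lra|]. rewrite Rmult_assoc, Rinv_l by lra. lra.
  - apply (Rmult_le_reg_r Q); [lra|]. rewrite Rmult_assoc, Rinv_l by lra. lra.
Qed.

Lemma sin_sq_le_cos_sq l : 0 < l <= PI / 4 -> sin l ^ 2 <= cos l ^ 2.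
Proof.
  intros Hl. pose proof PI_RGT_0.
  assert (0 <= cos (2 * l)) by (apply cos_ge_0; lra).
  rewrite cos_2a in *; nra.
Qed.

Lemma sin_cos_sq_pos l : 0 < l <= PI / 4 -> 0 < sin l ^ 2 /\ 0 < cos l ^ 2.
Proof.
  intros Hl. pose proof PI_RGT_0.
  assert (0 < sin l) by (apply sin_gt_0; lra).
  assert (0 < cos l) by (apply cos_gt_0; lra).
  split; nra.
Qed.

Lemma sin_2a_sq l : sin (2 * l) ^ 2 = 4 * (cos l ^ 2 * sin l ^ 2).
Proof. rewrite sin_2a; ring. Qed.

Lemma one_add_cos_2a_mul th eta :
  1 + cos (2 * th) * cos (2 * eta)
  = 2 * (cos th ^ 2 * cos eta ^ 2 + sin th ^ 2 * sin eta ^ 2).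
Proof.
  pose proof (sin2_cos2 th); pose proof (sin2_cos2 eta); unfold Rsqr in *.
  rewrite !cos_2a; nra.
Qed.

Lemma one_sub_cos_2a_mul th eta :
  1 - cos (2 * th) * cos (2 * eta)
  = 2 * (cos th ^ 2 * sin eta ^ 2 + sin th ^ 2 * cos eta ^ 2).
Proof.
  pose proof (sin2_cos2 th); pose proof (sin2_cos2 eta); unfold Rsqr in *.
  rewrite !cos_2a; nra.
Qed.

Theorem lemma3 (th eta : R) (phi : bool -> bool -> Cx) :
  0 < th <= PI / 4 -> 0 < eta <= PI / 4 ->
  unit_vec phi -> yields_maxent th eta phi ->
  (sin (2 * th)) ^ 2 * (sin (2 * eta)) ^ 2 / (4 * (1 + cos (2 * th) * cos (2 * eta)))
    <= prob th eta phi /\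
  prob th eta phi <=
    (sin (2 * th)) ^ 2 * (sin (2 * eta)) ^ 2 / (4 * (1 - cos (2 * th) * cos (2 * eta))).
Proof.
  intros Hth Het Hu Hm.
  pose proof (proj1 Hm) as Hp.
  destruct (yields_maxent_weights th eta phi Hm) as [c [Hc Hw]].
  rewrite !sin_2a_sq, one_add_cos_2a_mul, one_sub_cos_2a_mul.
  pose proof (sin_sq_le_cos_sq th Hth); pose proof (sin_sq_le_cos_sq eta Het).
  destruct (sin_cos_sq_pos th Hth), (sin_cos_sq_pos eta Het).
  set (a := cos th ^ 2) in *; set (A := sin th ^ 2) in *.
  set (b := cos eta ^ 2) in *; set (B := sin eta ^ 2) in *.
  assert (Hmix : 2 * (a * A * b * B)
                 = prob th eta phi * (c * (a * b + A * B) + (1 - c) * (a * B + A * b))).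
  { apply prob_mixture with (x00 := Cnorm2 (phi false false))
      (x01 := Cnorm2 (phi false true)) (x10 := Cnorm2 (phi true false))
      (x11 := Cnorm2 (phi true true)); [exact Hu | ..];
      [apply (Hw false false) | apply (Hw false true)
      | apply (Hw true false) | apply (Hw true true)]. }
  assert (HQP : 0 < a * B + A * b <= a * b + A * B) by nra.
  destruct (mixture_bounds _ _ _ _ _ HQP Hc Hp Hmix) as [Hlo Hhi].
  split; [ replace (4 * (a * A) * (4 * (b * B)) / (4 * (2 * (a * b + A * B))))
             with (2 * (a * A * b * B) / (a * b + A * B)) by (field; lra)
         | replace (4 * (a * A) * (4 * (b * B)) / (4 * (2 * (a * B + A * b))))
             with (2 * (a * A * b * B) / (a * B + A * b)) by (field; lra) ];
    assumption.
Qed.
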